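(* Let a trader with concave, increasing utility $U_S$ hold $\Delta>0$ units of a yield token with outstanding random yield payments $Y_1,\dots,Y_n$ (paid in order before maturity). A menu of prices $(p_1,\dots,p_n)$ offers the trader the choice of selling all $\Delta$ tokens just before payment $Y_t$ at price $p_t$ ($t\in\{1,\dots,n\}$), giving expected utility $\tilde U^t_S=\mathbb{E}[U_S((\sum_{i=1}^{t-1}Y_i+p_t)\Delta)]$, or never selling, giving $\tilde U^{n+1}_S=\mathbb{E}[U_S((\sum_{i=1}^nY_i)\Delta)]$. Define $$p_n^*(\Delta)=\sup\Big\{p>0:\ \mathbb{E}\big[U_S((\textstyle\sum_{i=1}^{n-1}Y_i+p)\Delta)\big]\le \mathbb{E}\big[U_S((\sum_{i=1}^nY_i)\Delta)\big]\Big\},$$ and for $t\in\{1,\dots,n-1\}$, $$p_t^*(\Delta)=p_{t+1}^*(\Delta)+\sup\Big\{p>0:\ \mathbb{E}\big[U_S((\textstyle\sum_{i=1}^{t-1}Y_i+p+p^*_{t+1})\Delta)\big]\le \mathbb{E}\big[U_S((\sum_{i=1}^{t}Y_i+p^*_{t+1})\Delta)\big]\Big\}.$$ If the liquidity provider presents the menu $\{p_i^*(\Delta)\}_{i=1}^n$, the trader obtains the same expected utility for each of his $n+1$ actions. Moreover, $\{p_i^*(\Delta)\}_{i=1}^n$ is the unique indifference menu.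
   Context: An indifference menu is a menu of prices $(p_1,\dots,p_n)$ under which $\tilde U^1_S=\tilde U^2_S=\dots=\tilde U^{n+1}_S$. Expectations are over the joint distribution of $Y_1,\dots,Y_n$. *)

From HB Require Import structures.
From mathcomp Require Import all_boot all_order all_algebra.
From mathcomp Require Import all_classical all_reals all_analysis.
Set Implicit Arguments. Unset Strict Implicit. Unset Printing Implicit Defensive.
Import Order.TTheory GRing.Theory Num.Theory.
Local Open Scope ring_scope.

Definition concave_fun (R : realType) (U : R -> R) : Prop :=
  forall (x y l : R), 0 <= l <= 1 ->
    l * U x + (1 - l) * U y <= U (l * x + (1 - l) * y).

Definition strictly_increasing (R : realType) (U : R -> R) : Prop :=
  forall x y : R, x < y -> U x < U y.

Section yield.
Context {d : measure_display} {T : measurableType d} {R : realType}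
  (P : probability T R) (n : nat) (U : R -> R) (Y : nat -> T -> R) (Delta : R).

Definition psum (t : nat) (w : T) : R := \sum_(1 <= i < t) Y i w.

Definition util_sell (t : nat) (pt : R) : \bar R :=
  'E_P[fun w => U ((psum t w + pt) * Delta)].

Definition util_never : \bar R :=
  'E_P[fun w => U (psum n.+1 w * Delta)].

Definition tildeU (p : nat -> R) (t : nat) : \bar R :=
  if (t <= n)%N then util_sell t (p t) else util_never.

Definition indifference_menu (p : nat -> R) : Prop :=
  forall s t : nat, (1 <= s <= n.+1)%N -> (1 <= t <= n.+1)%N ->
    tildeU p s = tildeU p t.

(* increment: sup{p > 0 : E[U((S_{t-1}+p+q)Δ)] <= E[U((S_t + q)Δ)]},
   with q = p*_{t+1} (and q = 0 for t = n) *)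
Definition pincr (t : nat) (q : R) : R :=
  sup [set p : R | 0 < p /\
    ('E_P[fun w => U ((psum t w + p + q) * Delta)] <=
     'E_P[fun w => U ((psum t.+1 w + q) * Delta)])%E].

(* pstar_down k = p*_{n+1-k}, with the convention p*_{n+1} = 0 *)
Fixpoint pstar_down (k : nat) : R :=
  match k with
  | 0 => 0
  | k'.+1 => pstar_down k' + pincr (n - k') (pstar_down k')
  end.

Definition pstar (t : nat) : R := pstar_down (n.+1 - t).

End yield.

From HB Require Import structures.
From mathcomp Require Import all_boot all_order all_algebra.
From mathcomp Require Import all_classical all_reals all_analysis.
From mathcomp Require Import measurable_realfun ring lra zify.
Set Implicit Arguments. Unset Strict Implicit. Unset Printing Implicit Defensive.
Import Order.TTheory GRing.Theory Num.Theory.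
Local Open Scope classical_set_scope.
Local Open Scope ring_scope.

(* With q := p*_{t+1} >= 0 and S_t the partial sums
   of the payments, phi(p) := E[U((S_{t-1} + p + q) Delta)] is nondecreasing
   and, like U, concave, hence continuous from each side.  Since U is strictly
   increasing, E[U((S_t + q) Delta)] < U(K) for some K, so the set of p > 0 with
   phi(p) <= E[U((S_t + q) Delta)] is bounded and its supremum p solves
   phi(p) = E[U((S_t + q) Delta)]: selling before Y_t at p*_t = p + q is worth
   exactly as much as selling before Y_{t+1} at p*_{t+1}.  Chaining these
   equalities down from t = n + 1 gives indifference.  Uniqueness: by strict
   monotonicity p |-> E[U((S_{t-1} + p) Delta)] is injective, and any
   indifference menu gives it the value E[U(S_n Delta)] at p_t. *)

Lemma exists_small_step {R : realFieldType} (L e : R) :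
  0 < e -> exists2 h : R, 0 < h <= 1 & h * `|L| < e.
Proof.
move=> e0; have L0 := normr_ge0 L.
exists (e / (`|L| + e)).
  by apply/andP; split; [rewrite divr_gt0 | rewrite ler_pdivrMr]; lra.
by rewrite mulrAC ltr_pdivrMr; nra.
Qed.

Section concave.
Context {R : realType} {f : R -> R}.
Hypothesis f_concave : concave_fun f.

Lemma concave_chord a b c : a < b -> b < c ->
  (f c - f b) * (b - a) <= (f b - f a) * (c - b).
Proof.
move=> ab bc; have ca : 0 < c - a by lra.
set l := (c - b) / (c - a).
have hl : l * (c - a) = c - b by rewrite /l divfK // gt_eqF.
have l01 : 0 <= l <= 1 by apply/andP; split; nra.
have := f_concave a c l01.
rewrite (_ : l * a + (1 - l) * c = b); last by nra.
by move/(ler_wpM2r (ltW ca)); nra.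
Qed.

Lemma concave_le_chord b h : 0 <= h -> f (b + h) <= f b + h * (f b - f (b - 1)).
Proof.
rewrite le_eqVlt => /predU1P [<-|h0]; first by rewrite addr0 mul0r addr0.
have := @concave_chord (b - 1) b (b + h); nra.
Qed.

Lemma concave_ge_chord b h : 0 <= h -> h <= 1 ->
  f b - h * (f b - f (b - 1)) <= f (b - h).
Proof.
move=> h0 h1; have := f_concave (b - 1) b (l := h); rewrite h0 h1 => /(_ isT).
by rewrite (_ : h * (b - 1) + (1 - h) * b = b - h); lra.
Qed.

Lemma concave_lt_right b c : f b < c -> exists2 h, 0 < h & f (b + h) < c.
Proof.
rewrite -subr_gt0 => /(exists_small_step (f b - f (b - 1))) [h /andP [h0 _] small].
exists h => //; have := concave_le_chord b (ltW h0).
have := ler_norm (f b - f (b - 1)); nra.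
Qed.

Lemma concave_gt_left b c : c < f b -> exists2 h, 0 < h & c < f (b - h).
Proof.
rewrite -subr_gt0 => /(exists_small_step (f b - f (b - 1))) [h /andP [h0 h1] small].
exists h => //; have := concave_ge_chord b (ltW h0) h1.
have := ler_norm (f b - f (b - 1)); nra.
Qed.

Lemma concave_sup_sublevel c B : {homo f : x y / x <= y} -> f 0 <= c ->
  (forall p, f p <= c -> p <= B) ->
  0 <= sup [set p | 0 < p /\ f p <= c] /\ f (sup [set p | 0 < p /\ f p <= c]) = c.
Proof.
move=> f_mono f0c bounded; set A := [set p | _ /\ _].
have supA : A !=set0 -> has_sup A.
  by move=> A0; split => //; exists B => p [_ /bounded].
have sup_empty : ~ (A !=set0) -> sup A = 0.
  move=> A0; rewrite (_ : A = set0) ?sup0 //.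
  by apply/seteqP; split => // p Ap; apply: A0; exists p.
have sup_ge0 : 0 <= sup A.
  have [[p [p0 fp]]|A0] := pselect (A !=set0); last by rewrite sup_empty.
  by apply: le_trans (ltW p0) _; apply: sup_upper_bound => //; apply: supA; exists p.
split => //; apply/eqP; rewrite eq_le !leNgt; apply/andP; split; apply/negP => hs.
- have A0 : A !=set0 by apply: contrapT => /sup_empty s0; move: hs; rewrite s0 ltNge f0c.
  have [h h0 fh] := concave_gt_left hs.
  have [|p [_ fp] hp] := sup_gt A0 (x := sup A - h); first by lra.
  by have := f_mono _ _ (ltW hp); lra.
- have [h h0 fh] := concave_lt_right hs.
  have Ash : A (sup A + h) by split; lra.
  have := sup_upper_bound (supA (ex_intro _ _ Ash)) Ash; lra.
Qed.

End concave.

Section expectation.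
Context {d} {T : measurableType d} {R : realType} {P : probability T R}.

Lemma le_expectation (f g : T -> R) : f \in Lfun P 1 -> g \in Lfun P 1 ->
  (forall w, f w <= g w) -> ('E_P[f] <= 'E_P[g])%E.
Proof.
move=> /Lfun1_integrable fi /Lfun1_integrable gi fg.
by rewrite unlock; apply: le_integral => // w _; rewrite lee_fin.
Qed.

Lemma expectation_gt0 (f : T -> R) : f \in Lfun P 1 -> (forall w, 0 < f w) ->
  (0 < 'E_P[f])%E.
Proof.
move=> /Lfun1_integrable/integrableP [mf _] f0.
rewrite lt0e expectation_ge0 ?andbT => [|w]; last exact: ltW.
apply/eqP => Ef0.
have : (\int[P]_w `|(f w)%:E| = 0)%E.
  rewrite -Ef0 unlock; apply: eq_integral => w _.
  by rewrite gee0_abs // lee_fin ltW.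
case/(ae_eq_integral_abs P measurableT mf) => N [mN PN0 fN].
have : (P setT <= P N)%E.
  apply: le_measure; rewrite ?inE // => w _; apply: fN => /= /(_ I) [].
  by apply/eqP; rewrite gt_eqF.
by rewrite probability_setT PN0 lee_fin ler10.
Qed.

Lemma lt_expectation (f g : T -> R) : f \in Lfun P 1 -> g \in Lfun P 1 ->
  (forall w, f w < g w) -> ('E_P[f] < 'E_P[g])%E.
Proof.
move=> fL gL fg; rewrite -sube_gt0 -expectationB //.
by apply: expectation_gt0 => [|w]; [exact: rpredB | rewrite subr_gt0].
Qed.

End expectation.

Section expected_utility.
Context d (T : measurableType d) (R : realType) (P : probability T R)
  (U : R -> R) (Delta : R).
Hypotheses (Delta_gt0 : 0 < Delta) (U_concave : concave_fun U)
  (U_incr : strictly_increasing U).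

Lemma U_nondecreasing : {homo U : x y / x <= y}.
Proof. by move=> x y; rewrite le_eqVlt => /predU1P [->//|/U_incr/ltW]. Qed.

Lemma Lfun_utility (f : T -> R) m : f \in Lfun P 1 -> (forall w, m <= f w) ->
  (fun w => U (f w * Delta)) \in Lfun P 1.
Proof.
move=> fL fm; set x0 := m * Delta; set L := U x0 - U (x0 - 1).
have L0 : 0 <= L by rewrite subr_ge0 U_nondecreasing // gerBl.
have gL : (fun w => `|U x0| + L * `|x0| + L * Delta * `|f w|) \in Lfun P 1.
  by apply: rpredD; [exact: Lfun_cst | apply: rpredZ; exact: Lfun_norm].
apply/Lfun1_integrable; move/Lfun1_integrable: gL => gi.
apply: (le_integrable measurableT _ _ gi).
  apply/measurable_EFinP/measurableT_comp; first exact: nondecreasing_measurable U_nondecreasing.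
  by apply: measurable_funM => //; move/sub_Lfun_mfun: fL; rewrite inE.
(* on [x0, +oo), U lies between U x0 and the chord line through x0 - 1 and x0 *)
move=> w _; rewrite lee_fin /=; set y := f w * Delta.
have x0y : x0 <= y by rewrite ler_wpM2r // ltW.
have lo : U x0 <= U y by exact: U_nondecreasing.
have := concave_le_chord U_concave x0 (_ : 0 <= y - x0).
rewrite subr_ge0 addrC subrK -/L => /(_ x0y) up.
have yx0 : y - x0 <= `|f w| * Delta + `|x0|.
  have := ler_wpM2r (ltW Delta_gt0) (ler_norm (f w)).
  by have := ler_norm (- x0); rewrite normrN /y; lra.
have g0 : 0 <= `|U x0| + L * `|x0| + L * Delta * `|f w|.
  by rewrite !addr_ge0 // !mulr_ge0 // ltW.
rewrite [leRHS]ger0_norm // ler_norml.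
have := ler_wpM2l L0 yx0; have := ler_norm (U x0); have := ler_norm (- U x0).
by rewrite normrN; lra.
Qed.

Lemma Lfun_shift (f : T -> R) a : f \in Lfun P 1 -> (fun w => f w + a) \in Lfun P 1.
Proof. by move=> fL; apply: rpredD => //; exact: Lfun_cst. Qed.

Lemma le_expected_utility (f g : T -> R) m :
  f \in Lfun P 1 -> g \in Lfun P 1 -> (forall w, m <= f w) -> (forall w, f w <= g w) ->
  ('E_P[fun w => U (f w * Delta)] <= 'E_P[fun w => U (g w * Delta)])%E.
Proof.
move=> fL gL fm fg; apply: le_expectation => [||w].
- exact: Lfun_utility fL fm.
- by apply: Lfun_utility gL _ => w; apply: le_trans (fm w) (fg w).
- by apply: U_nondecreasing; rewrite ler_wpM2r // ltW.
Qed.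

Lemma lt_expected_utility (f g : T -> R) m :
  f \in Lfun P 1 -> g \in Lfun P 1 -> (forall w, m <= f w) -> (forall w, f w < g w) ->
  ('E_P[fun w => U (f w * Delta)] < 'E_P[fun w => U (g w * Delta)])%E.
Proof.
move=> fL gL fm fg; apply: lt_expectation => [||w].
- exact: Lfun_utility fL fm.
- by apply: Lfun_utility gL _ => w; apply: le_trans (fm w) (ltW (fg w)).
- by apply: U_incr; rewrite ltr_pM2r.
Qed.

Definition eutil (f : T -> R) : R := fine ('E_P[fun w => U (f w * Delta)])%E.

Lemma eutilE (f : T -> R) m : f \in Lfun P 1 -> (forall w, m <= f w) ->
  ('E_P[fun w => U (f w * Delta)] = (eutil f)%:E)%E.
Proof. by move=> fL fm; rewrite fineK // expectation_fin_num // (Lfun_utility fL fm). Qed.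

Lemma exists_utility_gt (f : T -> R) m : f \in Lfun P 1 -> (forall w, m <= f w) ->
  exists K, ('E_P[fun w => U (f w * Delta)] < (U K)%:E)%E.
Proof.
move=> fL fm; have fE := eutilE fL fm; apply: contrapT => /forallNP noK.
have UK K : U K <= eutil f by move/negP: (noK K); rewrite -leNgt fE lee_fin.
have f1L := Lfun_shift 1 fL; have f1m w : m <= f w + 1 by rewrite ler_wpDr ?fm.
have f_lt w : f w < f w + 1 by rewrite ltrDl.
(* otherwise U <= E[U(f Delta)] < E[U((f + 1) Delta)] everywhere *)
have : ('E_P[fun w => U ((f w + 1) * Delta)] <= 'E_P[cst (eutil f)])%E.
  by apply: le_expectation => //; [exact: Lfun_utility f1L f1m | exact: Lfun_cst].
rewrite expectation_cst -fE => /(lt_le_trans (lt_expected_utility fL f1L fm f_lt)).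
by rewrite ltxx.
Qed.

Lemma eutil_shift_concave (X : T -> R) m : X \in Lfun P 1 -> (forall w, m <= X w) ->
  concave_fun (fun a => eutil (fun w => X w + a)).
Proof.
move=> XL Xm a b l l01.
have Xcm c w : m + c <= X w + c by rewrite lerD2r.
have UXL c := Lfun_utility (Lfun_shift c XL) (Xcm c).
have XcE c := eutilE (Lfun_shift c XL) (Xcm c).
rewrite -lee_fin EFinD !EFinM -!XcE -!expectationZl // -expectationD ?Lfun_scale //.
apply: le_expectation => [|//|w /=]; first by apply: rpredD; exact: Lfun_scale.
have -> : (X w + (l * a + (1 - l) * b)) * Delta =
    l * ((X w + a) * Delta) + (1 - l) * ((X w + b) * Delta) by ring.
by rewrite mulrC (mulrC _ (1 - l)); exact: U_concave l01.
Qed.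

Definition indifference_price (X Z : T -> R) : R :=
  sup [set p | 0 < p /\
    ('E_P[fun w => U ((X w + p) * Delta)] <= 'E_P[fun w => U (Z w * Delta)])%E].

Lemma indifference_priceP (X Z : T -> R) :
  X \in Lfun P 1 -> Z \in Lfun P 1 -> (forall w, 0 <= X w) -> (forall w, X w <= Z w) ->
  0 <= indifference_price X Z /\
  ('E_P[fun w => U ((X w + indifference_price X Z) * Delta)] =
   'E_P[fun w => U (Z w * Delta)])%E.
Proof.
move=> XL ZL X0 XZ.
have Xa_ge a w : a <= X w + a := ler_wpDl (X0 w) (lexx a).
have XaE a := eutilE (Lfun_shift a XL) (Xa_ge a).
have ZE := eutilE ZL (fun w => le_trans (X0 w) (XZ w)).
set phi := fun a => eutil (fun w => X w + a).
have phi_mono : {homo phi : a b / a <= b}.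
  move=> a b ab; rewrite -lee_fin -!XaE.
  apply: le_expected_utility (Xa_ge a) _ => [||w]; try exact: Lfun_shift.
  by rewrite lerD2l.
have phi0 : phi 0 <= eutil Z.
  rewrite -lee_fin -XaE -ZE; apply: le_expected_utility (Xa_ge 0) _ => // [|w].
    exact: Lfun_shift.
  by rewrite addr0.
have [K ZK] := exists_utility_gt ZL (fun w => le_trans (X0 w) (XZ w)).
have bounded p : phi p <= eutil Z -> p <= K / Delta.
  move=> phip; rewrite ler_pdivlMr // leNgt; apply/negP => /ltW Kp.
  suff : ((U K)%:E <= 'E_P[fun w => U (Z w * Delta)])%E by rewrite leNgt ZK.
  rewrite ZE lee_fin (le_trans _ phip) // -lee_fin -XaE -(expectation_cst P).
  apply: le_expectation => [||w]; first exact: Lfun_cst.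
    exact: Lfun_utility (Lfun_shift p XL) (Xa_ge p).
  exact/U_nondecreasing/(le_trans Kp)/(ler_wpM2r (ltW Delta_gt0) (Xa_ge p w)).
have [s0 phis] := concave_sup_sublevel (eutil_shift_concave XL X0) phi_mono phi0 bounded.
rewrite /indifference_price.
under eq_set => p do rewrite XaE ZE lee_fin.
by rewrite XaE ZE phis.
Qed.

Lemma expected_utility_shift_inj (X : T -> R) m a b :
  X \in Lfun P 1 -> (forall w, m <= X w) ->
  ('E_P[fun w => U ((X w + a) * Delta)] = 'E_P[fun w => U ((X w + b) * Delta)])%E ->
  a = b.
Proof.
move=> XL Xm Eab.
have shift_lt c c' : c < c' ->
    ('E_P[fun w => U ((X w + c) * Delta)] < 'E_P[fun w => U ((X w + c') * Delta)])%E.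
  move=> cc'; apply: (lt_expected_utility (m := m + c)) => [||w|w].
  - exact: Lfun_shift.
  - exact: Lfun_shift.
  - by rewrite lerD2r.
  - by rewrite ltrD2l.
by apply/eqP; rewrite eq_le !leNgt; apply/andP; split; apply/negP => /shift_lt;
  rewrite Eab ltxx.
Qed.

End expected_utility.

Lemma nat_down_ind (Q : nat -> Prop) (m n : nat) : Q n ->
  (forall t, (m <= t < n)%N -> Q t.+1 -> Q t) -> forall t, (m <= t <= n)%N -> Q t.
Proof.
move=> Qn IH; suff Qdown k : (k <= n - m)%N -> Q (n - k)%N.
  by move=> t /andP [mt tn]; rewrite -(subKn tn); apply/Qdown/leq_sub2l.
elim: k => [|k IHk] k_le; first by rewrite subn0.
have k_lt : (k < n)%N by lia.
by apply: IH; [lia | rewrite subnSK //; apply: IHk; lia].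
Qed.

Section indifference_menu.
Context {d} {T : measurableType d} {R : realType} (P : probability T R) (n : nat)
  (U : R -> R) (Y : nat -> T -> R) (Delta : R).
Hypotheses (Delta_gt0 : 0 < Delta) (U_concave : concave_fun U)
  (U_incr : strictly_increasing U).
Hypothesis Y_ge0 : forall i, (1 <= i <= n)%N -> forall w, 0 <= Y i w.
Hypothesis Y_Lfun : forall i, (1 <= i <= n)%N -> Y i \in Lfun P 1.

Local Notation sell := (util_sell P U Y Delta).
Local Notation never := (util_never P n U Y Delta).
Local Notation incr := (pincr P U Y Delta).
Local Notation menu := (pstar P n U Y Delta).

Lemma psumS t w : (1 <= t)%N -> psum Y t.+1 w = psum Y t w + Y t w.
Proof. by move=> t1; rewrite /psum big_nat_recr. Qed.

Lemma psum_Lfun t : (t <= n.+1)%N -> psum Y t \in Lfun P 1.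
Proof.
move=> tn; rewrite (_ : psum Y t = \sum_(1 <= i < t) Y i); last first.
  by apply/funext => w; rewrite /psum fct_sumE.
by rewrite big_nat_cond; apply: rpred_sum => i /andP [/andP [i1 it] _]; apply: Y_Lfun; lia.
Qed.

Lemma psum_ge0 t w : (t <= n.+1)%N -> 0 <= psum Y t w.
Proof.
move=> tn; rewrite /psum big_nat_cond; apply: sumr_ge0 => i /andP [/andP [i1 it] _].
by apply: Y_ge0; lia.
Qed.

Lemma psum_le_succ t w : (1 <= t <= n)%N -> psum Y t w <= psum Y t.+1 w.
Proof.
by move=> tn; rewrite psumS ?lerDl; [exact: Y_ge0 | case/andP: tn].
Qed.

Lemma pincrE t q : incr t q =
  indifference_price P U Delta (fun w => psum Y t w + q) (fun w => psum Y t.+1 w + q).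
Proof.
rewrite /pincr /indifference_price; congr sup; apply: eq_set => p.
rewrite (_ : (fun w => U ((psum Y t w + p + q) * Delta)) =
             (fun w => U ((psum Y t w + q + p) * Delta))) //.
by apply/funext => w; rewrite addrAC.
Qed.

Lemma pincrP t q : (1 <= t <= n)%N -> 0 <= q ->
  0 <= incr t q /\ sell t (incr t q + q) = sell t.+1 q.
Proof.
move=> tn q0; have tn1 : (t <= n.+1)%N by lia.
have tn2 : (t.+1 <= n.+1)%N by lia.
have XL := Lfun_shift q (psum_Lfun tn1).
have ZL := Lfun_shift q (psum_Lfun tn2).
have X0 w : 0 <= psum Y t w + q by rewrite addr_ge0 // psum_ge0.
have XZ w : psum Y t w + q <= psum Y t.+1 w + q by rewrite lerD2r psum_le_succ.
have [s0 Es] := indifference_priceP Delta_gt0 U_concave U_incr XL ZL X0 XZ.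
rewrite pincrE; split => //; rewrite /util_sell -Es; congr expectation.
by apply/funext => w; rewrite addrA addrAC.
Qed.

Lemma pstar_last : menu n.+1 = 0.
Proof. by rewrite /pstar subnn. Qed.

Lemma pstar_succ t : (1 <= t <= n)%N -> menu t = incr t (menu t.+1) + menu t.+1.
Proof.
by case/andP => _ tn; rewrite /pstar subSS subSn //= subKn // addrC.
Qed.

Lemma pstarP t : (1 <= t <= n.+1)%N -> 0 <= menu t /\ sell t (menu t) = never.
Proof.
move: t; apply: nat_down_ind => [|t tn [q0 Eq]].
  rewrite pstar_last; split => //; rewrite /util_sell /util_never.
  by congr expectation; apply/funext => w; rewrite addr0.
have tn' : (1 <= t <= n)%N by lia.
have [i0 Ei] := pincrP tn' q0.
by rewrite pstar_succ //; split; [rewrite addr_ge0 | rewrite Ei Eq].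
Qed.

Lemma tildeU_pstar t : (1 <= t <= n.+1)%N -> tildeU P n U Y Delta menu t = never.
Proof. by move=> t1; rewrite /tildeU; case: ifP => // _; case: (pstarP t1). Qed.

Lemma pstar_indifference : indifference_menu P n U Y Delta menu.
Proof. by move=> s t s1 t1; rewrite !tildeU_pstar. Qed.

Lemma indifference_menu_unique p : indifference_menu P n U Y Delta p ->
  forall t, (1 <= t <= n)%N -> p t = menu t.
Proof.
move=> p_ind t tn; have t1 : (1 <= t <= n.+1)%N by lia.
have := p_ind t n.+1 t1; rewrite /tildeU ltnn (_ : (t <= n)%N) ?leqnn; last by lia.
have tn1 : (t <= n.+1)%N by lia.
move=> /(_ isT); rewrite -(pstarP t1).2 /util_sell.
apply: (expected_utility_shift_inj Delta_gt0 U_concave U_incr (psum_Lfun tn1)) => w.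
exact: psum_ge0.
Qed.

End indifference_menu.

Theorem lemma19 (d : measure_display) (T : measurableType d) (R : realType)
  (P : probability T R) (n : nat) (U : R -> R)
  (Y : nat -> {RV P >-> R}) (Delta : R) :
  0 < Delta ->
  concave_fun U ->
  strictly_increasing U ->
  (forall i : nat, (1 <= i <= n)%N -> forall w : T, 0 <= Y i w) ->
  (forall i : nat, (1 <= i <= n)%N ->
     P.-integrable setT (fun w => (Y i w)%:E)) ->
  indifference_menu P n U (fun i => Y i) Delta (pstar P n U (fun i => Y i) Delta) /\
  (forall p : nat -> R, indifference_menu P n U (fun i => Y i) Delta p ->
     forall t : nat, (1 <= t <= n)%N -> p t = pstar P n U (fun i => Y i) Delta t).
Proof.
move=> Delta_gt0 U_concave U_incr Y_ge0 Y_int.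
have Y_Lfun i : (1 <= i <= n)%N -> (Y i : T -> R) \in Lfun P 1.
  by move=> i_n; apply/Lfun1_integrable/Y_int.
split; first exact: pstar_indifference Delta_gt0 U_concave U_incr Y_ge0 Y_Lfun.
exact: indifference_menu_unique Delta_gt0 U_concave U_incr Y_ge0 Y_Lfun.
Qed.
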